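(* Consider the ternary hypothesis test on an observation vector $\mathbf{y}=(y_0,\dots,y_{N-1})\in\mathbb{R}^N$ with hypotheses $\mathcal{H}_0,\mathcal{H}_1,\mathcal{H}_2$ having probability densities $p(\mathbf{y};\mathcal{H}_0)$, $p(\mathbf{y};\mathcal{H}_1)$, $p(\mathbf{y};\mathcal{H}_2)$, and let $\alpha,\beta\in(0.5,1)$. The optimization problem $$\max_{\mathcal{R}_0,\mathcal{R}_1,\mathcal{R}_2}\Pr(\mathcal{H}_2|\mathcal{H}_2)\quad\text{s.t.}\quad \Pr(\mathcal{H}_0|\mathcal{H}_0)\ge\alpha,\ \Pr(\mathcal{H}_1|\mathcal{H}_1)\ge\beta$$ is equivalent to the optimization problem $$\max_{\mathcal{R}_0,\mathcal{R}_1,\mathcal{R}_2}\Pr(\mathcal{H}_2|\mathcal{H}_2)\quad\text{s.t.}\quad \Pr(\mathcal{H}_0|\mathcal{H}_0)=\alpha,\ \Pr(\mathcal{H}_1|\mathcal{H}_1)=\beta,$$ i.e., at the maximum of the first problem the two constraints hold with equality, so the two problems have the same optimal value.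
   Context: A decision rule is given by decision regions $\mathcal{R}_0,\mathcal{R}_1,\mathcal{R}_2\subseteq\mathbb{R}^N$ that are pairwise disjoint and whose union is $\mathbb{R}^N$; hypothesis $\mathcal{H}_i$ is declared when $\mathbf{y}\in\mathcal{R}_i$. For $i,j\in\{0,1,2\}$, $\Pr(\mathcal{H}_i|\mathcal{H}_j):=\int_{\mathcal{R}_i}p(\mathbf{y};\mathcal{H}_j)\,d\mathbf{y}$ denotes the probability of declaring $\mathcal{H}_i$ when $\mathcal{H}_j$ is true. *)

From HB Require Import structures.
From mathcomp Require Import all_boot all_order all_algebra.
From mathcomp Require Import all_classical all_reals all_analysis.
Set Implicit Arguments. Unset Strict Implicit. Unset Printing Implicit Defensive.
Import Order.TTheory GRing.Theory Num.Theory.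
Local Open Scope classical_set_scope.
Local Open Scope ring_scope.

(* Observation space R^N is represented as N.-tuple R, with the product
   (Borel) sigma-algebra generated by the coordinate maps. *)

(* mu is the Lebesgue measure on R^N: it gives every closed box its volume.
   (This characterizes Lebesgue measure on the Borel sets of R^N.) *)
Definition is_lebesgue_measure_N (R : realType) (N : nat)
    (mu : set (N.-tuple R) -> \bar R) : Prop :=
  forall a b : 'I_N -> R, (forall i, a i <= b i) ->
    mu [set x : N.-tuple R | forall i, a i <= tnth x i <= b i]
    = (\prod_(i < N) (b i - a i))%:E.

Definition is_density (R : realType) (N : nat)
    (mu : {measure set (N.-tuple R) -> \bar R}) (f : N.-tuple R -> R) : Prop :=
  measurable_fun setT f /\ (forall y, 0 <= f y) /\
  (\int[mu]_y (f y)%:E = 1)%E.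

Definition decision_rule (R : realType) (N : nat) (Rg : 'I_3 -> set (N.-tuple R)) : Prop :=
  (forall i, measurable (Rg i)) /\
  (forall i j, i != j -> Rg i `&` Rg j = set0) /\
  (\bigcup_(i in [set: 'I_3]) Rg i = setT).

Definition PrHH (R : realType) (N : nat) (mu : {measure set (N.-tuple R) -> \bar R})
    (p : 'I_3 -> N.-tuple R -> R) (Rg : 'I_3 -> set (N.-tuple R)) (i j : 'I_3) : \bar R :=
  (\int[mu]_(y in Rg i) (p j y)%:E)%E.

Definition H0 : 'I_3 := @Ordinal 3 0 isT.
Definition H1 : 'I_3 := @Ordinal 3 1 isT.
Definition H2 : 'I_3 := @Ordinal 3 2 isT.

Definition feasible_ineq (R : realType) (N : nat) (mu : {measure set (N.-tuple R) -> \bar R})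
    (p : 'I_3 -> N.-tuple R -> R) (alpha beta : R) : set ('I_3 -> set (N.-tuple R)) :=
  [set Rg | decision_rule Rg /\
     (alpha%:E <= PrHH mu p Rg H0 H0)%E /\ (beta%:E <= PrHH mu p Rg H1 H1)%E].

Definition feasible_eq (R : realType) (N : nat) (mu : {measure set (N.-tuple R) -> \bar R})
    (p : 'I_3 -> N.-tuple R -> R) (alpha beta : R) : set ('I_3 -> set (N.-tuple R)) :=
  [set Rg | decision_rule Rg /\
     PrHH mu p Rg H0 H0 = alpha%:E /\ PrHH mu p Rg H1 H1 = beta%:E].

From HB Require Import structures.
From mathcomp Require Import all_boot all_order all_algebra.
From mathcomp Require Import all_classical all_reals all_analysis.
From mathcomp Require Import lra.

Set Implicit Arguments.
Unset Strict Implicit.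
Unset Printing Implicit Defensive.
Import Order.TTheory GRing.Theory Num.Theory.
Local Open Scope classical_set_scope.
Local Open Scope ring_scope.

(* Coordinate hyperplanes {y | y_0 = t} are Lebesgue-null, hence null for every
   density, so for a density measure nu the map t |-> nu (A `&` {y_0 <= t}) is a
   continuous nondecreasing function rising from 0 to nu A; its intermediate values
   give subregions of A of any prescribed mass. A feasible rule is thus improved by
   shrinking R_0 and R_1 to subregions of probability exactly alpha under H_0 and
   beta under H_1 and handing the rest to R_2, which can only increase Pr(H_2|H_2).
   For N = 0 the observation space is a point and, as alpha, beta > 0, no rule is
   feasible. *)

Section measure_monotone_bounds.
Context d (T : measurableType d) (R : realType) (nu : {measure set T -> \bar R}).
Local Open Scope ereal_scope.

Lemma measure_bigcup_le (F : (set T)^nat) (c : \bar R) :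
  (forall n, measurable (F n)) -> nondecreasing_seq F ->
  (forall n, nu (F n) <= c) -> nu (\bigcup_n F n) <= c.
Proof.
move=> mF ndF Fc.
apply: (cvge_to_le (nondecreasing_cvg_mu mF (bigcupT_measurable _ mF) ndF)).
exact: nearW.
Qed.

Lemma measure_bigcap_ge (F : (set T)^nat) (c : \bar R) :
  (forall n, measurable (F n)) -> nonincreasing_seq F -> nu (F 0%N) < +oo ->
  (forall n, c <= nu (F n)) -> c <= nu (\bigcap_n F n).
Proof.
move=> mF niF F0fin cF.
apply: (cvge_to_ge (nonincreasing_cvg_mu F0fin mF (bigcapT_measurable mF) niF)).
exact: nearW.
Qed.

End measure_monotone_bounds.

Section sublevel_sets.
Context d (T : measurableType d) (R : realType) (nu : {measure set T -> \bar R}).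
Variables (h : T -> R) (A : set T).
Hypotheses (mh : measurable_fun setT h) (mA : measurable A) (nuA : (nu A < +oo)%E).

Local Notation below t := (A `&` [set x | h x <= t]).
Local Notation strictly_below t := (A `&` [set x | h x < t]).

Let measurable_preimage B : measurable B -> measurable (h @^-1` B).
Proof. by move=> mB; rewrite -[_ @^-1` _]setTI; exact: mh. Qed.

Lemma measurable_below t : measurable (below t).
Proof.
apply: measurableI => //; rewrite [X in measurable X](_ : _ = h @^-1` `]-oo, t]).
  by apply: measurable_preimage; exact: measurable_itv.
by apply/seteqP; split => x /=; rewrite in_itv.
Qed.

Lemma measurable_strictly_below t : measurable (strictly_below t).
Proof.
apply: measurableI => //; rewrite [X in measurable X](_ : _ = h @^-1` `]-oo, t[).
  by apply: measurable_preimage; exact: measurable_itv.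
by apply/seteqP; split => x /=; rewrite in_itv.
Qed.

Lemma measure_below_le s t : s <= t -> (nu (below s) <= nu (below t))%E.
Proof.
move=> st; apply: le_measure; rewrite ?inE; try exact: measurable_below.
by move=> x [Ax /= hs]; split => //; exact: le_trans st.
Qed.

Lemma measure_below_finite t : (nu (below t) < +oo)%E.
Proof.
apply: le_lt_trans nuA; apply: le_measure; rewrite ?inE //.
exact: measurable_below.
Qed.

Lemma exists_measure_below_lt (c : \bar R) : (0 < c)%E ->
  exists t, (nu (below t) < c)%E.
Proof.
move=> c0; apply: contrapT => /forallNP below_ge.
have : (c <= nu (\bigcap_n below (- n%:R)%R))%E.
  apply: measure_bigcap_ge => [n|m n mn|//|n]; first exact: measurable_below.
  - apply/subsetPset => x [Ax /= hx]; split => //=.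
    by apply: le_trans hx _; rewrite lerN2 ler_nat.
  - exact: measure_below_finite.
  - by rewrite leNgt; apply/negP; exact: below_ge.
rewrite [X in nu X](_ : _ = set0) ?measure0; first by rewrite leNgt c0.
apply/seteqP; split => x //= xbelow.
have [_ /=] := xbelow (Num.bound `|h x|) I.
have := archi_boundP (normr_ge0 (h x)); have := lerNnormlW (lexx `|h x|).
set b := (Num.bound _)%:R; lra.
Qed.

Lemma exists_measure_below_gt (c : \bar R) : (c < nu A)%E ->
  exists t, (c < nu (below t))%E.
Proof.
move=> cA; apply: contrapT => /forallNP below_le.
have : (nu (\bigcup_n below n%:R) <= c)%E.
  apply: measure_bigcup_le => [n|m n mn|n]; first exact: measurable_below.
  - apply/subsetPset => x [Ax /= hx]; split => //=.
    by apply: le_trans hx _; rewrite ler_nat.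
  - by rewrite leNgt; apply/negP; exact: below_le.
rewrite [X in nu X](_ : _ = A); first by rewrite leNgt cA.
apply/seteqP; split => [x [n _ []]//|x Ax].
exists (Num.bound `|h x|) => //; split => //=.
have := archi_boundP (normr_ge0 (h x)); have := ler_norm (h x).
set b := (Num.bound _)%:R; lra.
Qed.

Lemma measure_below_right (s : R) (c : \bar R) :
  (forall n, c <= nu (below (s + n.+1%:R^-1)%R))%E -> (c <= nu (below s))%E.
Proof.
move=> c_le; rewrite [X in nu X](_ : _ = \bigcap_n below (s + n.+1%:R^-1)).
  apply: measure_bigcap_ge => [n|m n mn|//|//]; first exact: measurable_below.
    apply/subsetPset => x [Ax /= hx]; split => //=; apply: le_trans hx _.
    by rewrite lerD2l lef_pV2 ?posrE ?ltr0Sn // ler_nat.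
  exact: measure_below_finite.
apply/seteqP; split => [x [Ax hx] n _|x xbelow].
  by split => //=; apply: le_trans hx _; rewrite lerDl invr_ge0.
have [Ax _] := xbelow 0%N I; split => //=.
rewrite leNgt; apply/negP => /ltr_add_invr [k].
by have [_ /= hx] := xbelow k I; rewrite ltNge hx.
Qed.

Lemma measure_strictly_below_left (s : R) (c : \bar R) :
  (forall n, nu (below (s - n.+1%:R^-1)%R) <= c)%E -> (nu (strictly_below s) <= c)%E.
Proof.
move=> le_c; rewrite [X in nu X](_ : _ = \bigcup_n below (s - n.+1%:R^-1)).
  apply: measure_bigcup_le => [n|m n mn|//]; first exact: measurable_below.
  apply/subsetPset => x [Ax /= hx]; split => //=; apply: le_trans hx _.
  by rewrite lerD2l lerN2 lef_pV2 ?posrE ?ltr0Sn // ler_nat.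
apply/seteqP; split => [x [Ax /ltr_add_invr [k hk]]|x [n _ [Ax /= hx]]].
  by exists k => //; split => //=; rewrite lerBrDr ltW.
split => //=; apply: le_lt_trans hx _.
by rewrite ltrBlDr ltrDl invr_gt0 ltr0Sn.
Qed.

Lemma measure_below_quantile (c : \bar R) : (0 < c)%E -> (c < nu A)%E ->
  exists s, (nu (strictly_below s) <= c <= nu (below s))%E.
Proof.
move=> c0 cA.
have [t1 t1c] := exists_measure_below_lt c0.
have [t2 ct2] := exists_measure_below_gt cA.
pose E := [set t | (nu (below t) <= c)%E].
have supE : has_sup E.
  split; first by exists t1; exact: ltW.
  exists t2 => t Et; rewrite leNgt; apply/negP => t2t.
  by have := le_trans (measure_below_le (ltW t2t)) Et; rewrite leNgt ct2.
exists (sup E); apply/andP; split.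
  apply: measure_strictly_below_left => n.
  have n_pos : 0 < n.+1%:R^-1 :> R by rewrite invr_gt0.
  have [e Ee lt_e] := sup_adherent n_pos supE.
  by apply: le_trans Ee; apply: measure_below_le; exact: ltW.
apply: measure_below_right => n; rewrite leNgt; apply/negP => /ltW Esn.
have := sup_upper_bound supE Esn.
by rewrite leNgt ltrDl invr_gt0 ltr0Sn.
Qed.

Hypothesis null_levels : forall t, nu (h @^-1` [set t]) = 0%E.

Lemma measure_strictly_below s : nu (strictly_below s) = nu (below s).
Proof.
have -> : below s = strictly_below s `|` (A `&` h @^-1` [set s]).
  apply/seteqP; split => x /=.
    by rewrite le_eqVlt => -[Ax /orP[/eqP->|->]]; [right|left].
  by move=> -[[Ax /ltW]|[Ax ->]].
have mlevel : measurable (A `&` h @^-1` [set s]).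
  by apply: measurableI => //; apply: measurable_preimage; exact: measurable_set1.
rewrite measureU //; [|exact: measurable_strictly_below|].
- rewrite [X in _ = (_ + X)%E](_ : _ = 0%E) ?adde0 //; apply/eqP.
  rewrite -measure_le0 -(null_levels s) le_measure ?inE //.
  by apply: measurable_preimage; exact: measurable_set1.
- by apply/seteqP; split => x //= [[_ /= hlt] [_ /= hs]]; move: hlt; rewrite hs ltxx.
Qed.

Lemma measure_split (c : \bar R) : (0 <= c <= nu A)%E ->
  exists S, [/\ measurable S, S `<=` A & nu S = c].
Proof.
move=> /andP[]; rewrite le_eqVlt => /orP[/eqP <- _|c0].
  by exists set0; split; [exact: measurable0|exact: sub0set|exact: measure0].
rewrite le_eqVlt => /orP[/eqP ->|cA]; first by exists A; split.
have [s /andP[lt_c c_le]] := measure_below_quantile c0 cA.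
exists (below s); split; [exact: measurable_below|exact: subIsetl|].
by apply/le_anti; rewrite c_le -measure_strictly_below lt_c.
Qed.

End sublevel_sets.

Section density_measure.
Context d (T : measurableType d) (R : realType) (mu : {measure set T -> \bar R}).
Variable f : T -> R.

Definition density_measure of measurable_fun setT f & (forall x, 0 <= f x) :
  set T -> \bar R := fun A => (\int[mu]_(x in A) (f x)%:E)%E.

Variables (mf : measurable_fun setT f) (f0 : forall x, 0 <= f x).
Local Notation nu := (density_measure mf f0).

Let density_measure0 : nu set0 = 0%E.
Proof. exact: integral_set0. Qed.

Let density_measure_ge0 A : (0 <= nu A)%E.
Proof. by apply: integral_ge0 => x _; rewrite lee_fin. Qed.

Let density_measure_sigma_additive : semi_sigma_additive nu.
Proof.
apply: semi_sigma_additive_nng_induced => [|x]; last by rewrite lee_fin.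
exact/measurable_realfun.measurable_EFinP.
Qed.

HB.instance Definition _ := isMeasure.Build _ _ _ nu
  density_measure0 density_measure_ge0 density_measure_sigma_additive.

End density_measure.
Arguments density_measure {d T R} mu {f} mf f0.

Lemma measurable_hyperplane {R : realType} {N : nat} (i : 'I_N) (t : R) :
  measurable [set x : N.-tuple R | tnth x i = t].
Proof. by have := measurable_tnth i measurableT (measurable_set1 t); rewrite setTI. Qed.

Lemma lebesgue_hyperplane_null (R : realType) (N : nat)
    (mu : {measure set (N.-tuple R) -> \bar R}) (i : 'I_N) (t : R) :
  is_lebesgue_measure_N mu -> mu [set x | tnth x i = t] = 0%E.
Proof.
move=> leb.
pose a k j : R := if j == i then t else - k%:R.
pose b k j : R := if j == i then t else k%:R.
pose box k := [set x : N.-tuple R | forall j, a k j <= tnth x j <= b k j].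
have measurable_box k : measurable (box k).
  rewrite [X in measurable X](_ : _ = \bigcap_(j in [set: 'I_N])
      ((@tnth _ R)^~ j @^-1` [set` `[a k j, b k j]])).
    apply: fin_bigcap_measurable => [|j _]; first exact: finite_finset.
    by rewrite -[X in measurable X]setTI; apply: measurable_tnth => //; exact: measurable_itv.
  apply/seteqP; split => x /= xbox j; first by move=> _; rewrite /= in_itv; exact: xbox.
  by have := xbox j I; rewrite /= in_itv.
have box_null k : mu (box k) = 0%E.
  rewrite leb => [|j].
    by rewrite (bigD1 i) //= /a /b eqxx subrr mul0r.
  by rewrite /a /b; case: ifP => // _; apply: (@le_trans _ _ 0); rewrite ?oppr_le0 ler0n.
have box_negligible k : mu.-negligible (box k).
  exact/(negligibleP _ (measurable_box k))/box_null.
apply/(negligibleP _ (measurable_hyperplane i t)).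
apply: (negligibleS _ (negligible_bigcup box_negligible)) => x /= xi.
exists (\max_(j < N) Num.bound `|tnth x j|)%N => // j.
rewrite /a /b; case: ifP => [/eqP -> | _]; first by rewrite xi lexx.
rewrite -ler_norml; apply: le_trans (ltW (archi_boundP (normr_ge0 _))) _.
by rewrite ler_nat; exact: (leq_bigmax_cond (F := fun j => Num.bound `|tnth x j|)).
Qed.

Lemma lebesgue_density_split (R : realType) (n : nat)
    (mu : {measure set (n.+1.-tuple R) -> \bar R}) (f : n.+1.-tuple R -> R)
    (A : set (n.+1.-tuple R)) (c : \bar R) :
  is_lebesgue_measure_N mu -> is_density mu f -> measurable A ->
  (0 <= c <= \int[mu]_(y in A) (f y)%:E)%E ->
  exists S, [/\ measurable S, S `<=` A & \int[mu]_(y in S) (f y)%:E = c]%E.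
Proof.
move=> leb [mf [f0 f1]] mA cA.
pose nu := density_measure mu mf f0.
have nuA : (nu A < +oo)%E.
  apply: (@le_lt_trans _ _ (nu setT)); first by apply: le_measure; rewrite ?inE.
  by rewrite /nu /density_measure f1 ltry.
have null_levels t : nu [set x | tnth x ord0 = t] = 0%E.
  apply: null_set_integral; [exact: measurable_hyperplane| |exact: lebesgue_hyperplane_null].
  by apply: (measurable_funS measurableT) => //; exact/measurable_realfun.measurable_EFinP.
exact: (measure_split (measurable_tnth _) mA nuA null_levels cA).
Qed.

Lemma ereal_sup_image_dominated (X : Type) (R : realType) (f : X -> \bar R)
    (S U : set X) :
  U `<=` S -> (forall x, S x -> exists y, U y /\ (f x <= f y)%E) ->
  ereal_sup (f @` S) = ereal_sup (f @` U).
Proof.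
move=> US dominated; apply/le_anti/andP; split.
  apply: ge_ereal_sup => _ [x Sx <-]; have [y [Uy fxy]] := dominated x Sx.
  by apply: le_trans fxy _; apply: ereal_sup_ubound; exists y.
exact/le_ereal_sup/image_subset.
Qed.

Lemma ord3P (i : 'I_3) : [\/ i = H0, i = H1 | i = H2].
Proof.
by case: i => -[|[|[|k]]] // ilt; [apply: Or31|apply: Or32|apply: Or33]; apply: val_inj.
Qed.

Definition rule_of (T : Type) (S0 S1 : set T) : 'I_3 -> set T :=
  fun i => if i == H0 then S0 else if i == H1 then S1 else ~` (S0 `|` S1).

Lemma decision_rule_of (R : realType) (N : nat) (S0 S1 : set (N.-tuple R)) :
  measurable S0 -> measurable S1 -> S0 `&` S1 = set0 -> decision_rule (rule_of S0 S1).
Proof.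
move=> mS0 mS1 S01; split; [|split].
- move=> i; case: (ord3P i) => ->; rewrite /rule_of //=.
  by apply: measurableC; exact: measurableU.
- have S02 : S0 `&` ~` (S0 `|` S1) = set0 by rewrite setCU setIA setICr set0I.
  have S12 : S1 `&` ~` (S0 `|` S1) = set0 by rewrite setCU setICA setICr setI0.
  move=> i j; case: (ord3P i) => ->; case: (ord3P j) => -> //= _;
    by rewrite /rule_of /= 1?setIC.
- apply/seteqP; split => x // _.
  have [S0x|nS0x] := pselect (S0 x); first by exists H0.
  have [S1x|nS1x] := pselect (S1 x); first by exists H1.
  by exists H2 => //; rewrite /rule_of /= => -[].
Qed.

Lemma feasible_ineq_tuple0 (R : realType) (mu : {measure set (0.-tuple R) -> \bar R})
    (p : 'I_3 -> 0.-tuple R -> R) (alpha beta : R) (Rg : 'I_3 -> set (0.-tuple R)) :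
  0 < alpha -> 0 < beta -> ~ feasible_ineq mu p alpha beta Rg.
Proof.
move=> a0 b0 [[_ [disj _]] [h0 h1]].
have nonempty i j c : 0 < c -> (c%:E <= PrHH mu p Rg i j)%E -> Rg i !=set0.
  move=> c0 c_le; apply/set0P/negP => /eqP Ri0; move: c_le.
  by rewrite /PrHH Ri0 integral_set0 lee_fin leNgt c0.
have [x0 R0x0] := nonempty _ _ _ a0 h0.
have [x1 R1x1] := nonempty _ _ _ b0 h1.
have : (Rg H0 `&` Rg H1) x0 by split => //; rewrite (tuple0 x0) -(tuple0 x1).
by rewrite (disj H0 H1 erefl).
Qed.

Lemma feasible_ineq_dominated (R : realType) (n : nat)
    (mu : {measure set (n.+1.-tuple R) -> \bar R})
    (p : 'I_3 -> n.+1.-tuple R -> R) (alpha beta : R) (Rg : 'I_3 -> set (n.+1.-tuple R)) :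
  is_lebesgue_measure_N mu -> (forall j, is_density mu (p j)) ->
  0 <= alpha -> 0 <= beta -> feasible_ineq mu p alpha beta Rg ->
  exists Rg', feasible_eq mu p alpha beta Rg' /\
    (PrHH mu p Rg H2 H2 <= PrHH mu p Rg' H2 H2)%E.
Proof.
move=> leb dns a0 b0 [[mR [disj _]] [h0 h1]].
have [S0 [mS0 S0R0 PrS0]] : exists S, [/\ measurable S, S `<=` Rg H0 &
    \int[mu]_(y in S) (p H0 y)%:E = alpha%:E]%E.
  by apply: lebesgue_density_split => //; rewrite lee_fin a0.
have [S1 [mS1 S1R1 PrS1]] : exists S, [/\ measurable S, S `<=` Rg H1 &
    \int[mu]_(y in S) (p H1 y)%:E = beta%:E]%E.
  by apply: lebesgue_density_split => //; rewrite lee_fin b0.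
have S01 : S0 `&` S1 = set0.
  by apply: subsetI_eq0 S0R0 S1R1 _; exact: disj.
exists (rule_of S0 S1); split; first by split; [exact: decision_rule_of|split].
have [mp [p0 _]] := dns H2.
apply: ge0_subset_integral => //.
- exact: (decision_rule_of mS0 mS1 S01).1.
- exact/measurable_realfun.measurable_EFinP/(measurable_funS measurableT).
- by move=> x; rewrite lee_fin.
move=> x R2x; rewrite /rule_of /= => -[/S0R0 R0x|/S1R1 R1x].
- by have : (Rg H0 `&` Rg H2) x by []; rewrite disj.
- by have : (Rg H1 `&` Rg H2) x by []; rewrite disj.
Qed.

Theorem lemma1 (R : realType) (N : nat)
    (mu : {measure set (N.-tuple R) -> \bar R})
    (p : 'I_3 -> N.-tuple R -> R) (alpha beta : R) :
  is_lebesgue_measure_N mu ->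
  (forall j, is_density mu (p j)) ->
  2^-1 < alpha < 1 -> 2^-1 < beta < 1 ->
  (* every feasible rule of the first problem is dominated by a rule meeting
     both constraints with equality *)
  (forall Rg, feasible_ineq mu p alpha beta Rg ->
     exists Rg', feasible_eq mu p alpha beta Rg' /\
       (PrHH mu p Rg H2 H2 <= PrHH mu p Rg' H2 H2)%E) /\
  (* hence the two problems have the same optimal value *)
  ereal_sup [set PrHH mu p Rg H2 H2 | Rg in feasible_ineq mu p alpha beta]
  = ereal_sup [set PrHH mu p Rg H2 H2 | Rg in feasible_eq mu p alpha beta].
Proof.
move=> leb dns /andP[alpha_gt _] /andP[beta_gt _].
have alpha0 : 0 < alpha by apply: lt_trans alpha_gt; rewrite invr_gt0.
have beta0 : 0 < beta by apply: lt_trans beta_gt; rewrite invr_gt0.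
have dominated Rg : feasible_ineq mu p alpha beta Rg ->
    exists Rg', feasible_eq mu p alpha beta Rg' /\
      (PrHH mu p Rg H2 H2 <= PrHH mu p Rg' H2 H2)%E.
  case: N mu p leb dns Rg => [|n] mu p leb dns Rg feasible.
    by case: (feasible_ineq_tuple0 alpha0 beta0 feasible).
  by apply: feasible_ineq_dominated => //; exact: ltW.
split => //; apply: ereal_sup_image_dominated => // Rg [rule [Pr00 Pr11]].
by split; rewrite // Pr00 Pr11.
Qed.
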